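(* Let $1/2<\alpha<1$, $m\ge1$, and let $n,k$ be integers with $3\le k\le n-1$. Let $H=C_k\cup P_{n-k}$. Then $\lambda_1(A_\alpha(K_m\vee H))>\lambda_1(A_\alpha(K_m\vee P_n))$.
   Context: All graphs are finite, simple and undirected. $A_\alpha(G)=\alpha D(G)+(1-\alpha)A(G)$ with $A(G)$ the adjacency and $D(G)$ the degree matrix; $\lambda_1$ denotes the largest eigenvalue. $C_k$ is the cycle and $P_j$ the path on the indicated number of vertices, $\cup$ is disjoint union, $K_m$ the complete graph, and $\vee$ the join (disjoint union plus all edges between the two vertex sets). *)

From HB Require Import structures.
From mathcomp Require Import all_boot all_order all_algebra.
Set Implicit Arguments. Unset Strict Implicit. Unset Printing Implicit Defensive.
Import Order.TTheory GRing.Theory Num.Theory.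

Definition complete_g (m : nat) : rel 'I_m := fun i j => i != j.
Definition path_g (j : nat) : rel 'I_j :=
  fun a b => (a.+1 == b :> nat) || (b.+1 == a :> nat).
(* cycle C_k : i ~ i+1 mod k  (simple for k >= 3) *)
Definition cycle_g (k : nat) : rel 'I_k :=
  fun a b => (a.+1 %% k == b :> nat) || (b.+1 %% k == a :> nat).

(* disjoint union: first a vertices carry e1, last b carry e2 *)
Definition gunion a b (e1 : rel 'I_a) (e2 : rel 'I_b) : rel 'I_(a + b) :=
  fun x y => match split x, split y with
             | inl i, inl j => e1 i j
             | inr i, inr j => e2 i j
             | _, _ => false
             end.
Definition gjoin a b (e1 : rel 'I_a) (e2 : rel 'I_b) : rel 'I_(a + b) :=
  fun x y => match split x, split y with
             | inl i, inl j => e1 i j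
             | inr i, inr j => e2 i j
             | _, _ => true
             end.

Local Open Scope ring_scope.

Definition adj_mx (R : nzRingType) N (e : rel 'I_N) : 'M[R]_N :=
  \matrix_(i, j) (e i j)%:R.
Definition deg_mx (R : nzRingType) N (e : rel 'I_N) : 'M[R]_N :=
  \matrix_(i, j) ((i == j)%:R * #|[pred v | e i v]|%:R).
Definition A_alpha (R : nzRingType) N (alpha : R) (e : rel 'I_N) : 'M[R]_N :=
  alpha *: deg_mx R e + (1 - alpha) *: adj_mx R e.

Definition is_lambda1 (R : realFieldType) N (M : 'M[R]_N) (l : R) : Prop :=
  eigenvalue M l /\ forall x, eigenvalue M x -> x <= l.

Arguments complete_g m : clear implicits.
Arguments path_g j : clear implicits.
Arguments cycle_g k : clear implicits.

From HB Require Import structures.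
From mathcomp Require Import all_boot all_order all_algebra.
From mathcomp Require Import complex ring lra zify.
Import Order.TTheory GRing.Theory Num.Theory.
Set Implicit Arguments. Unset Strict Implicit. Unset Printing Implicit Defensive.

(* Let [y > 0] be the Perron eigenvector of [A_alpha(K_m \/ P_n)], with eigenvalue [l2].
   Cutting a window of [k] consecutive path vertices out of [P_n] and closing it into a
   cycle turns [K_m \/ P_n] into a relabelling of [K_m \/ (C_k u P_(n-k))]: the path edges
   [{a-1, a}] and [{a+k-1, a+k}] are traded for [{a, a+k-1}] and [{a-1, a+k}].  Choosing [a]
   at the first descent [y_(a+k) <= y_a] (or at an end of the path if there is none) makes
   this switch increase [y^T A_alpha y] weakly, so [l2 <= l1] by the Rayleigh principle.
   Equality would make [y] an eigenvector of the new matrix as well, which is impossible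
   since the switch changes [A_alpha y] at a vertex of the window. *)

Definition path_adj : rel nat := fun p q => (p.+1 == q) || (q.+1 == p).
Definition cycle_adj k : rel nat := fun p q =>
  path_adj p q || (p == 0) && (q.+1 == k) || (q == 0) && (p.+1 == k).
Definition union_adj k (h1 h2 : rel nat) : rel nat := fun p q =>
  (p < k) && (q < k) && h1 p q || (k <= p) && (k <= q) && h2 (p - k) (q - k).
(* [K_m] occupies the labels [0, m): a pair meeting it is an edge iff it is not a loop. *)
Definition join_adj m (h : rel nat) : rel nat := fun x y =>
  if (x < m) || (y < m) then x != y else h (x - m) (y - m).

Lemma path_adj_sym : symmetric path_adj.
Proof. by move=> p q; rewrite /path_adj orbC. Qed.

Lemma cycle_adj_sym k : symmetric (cycle_adj k).
Proof. by move=> p q; rewrite /cycle_adj path_adj_sym -orbA [X in _ || X]orbC orbA. Qed.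

Lemma union_adj_sym k h1 h2 : symmetric h1 -> symmetric h2 -> symmetric (union_adj k h1 h2).
Proof.
by move=> s1 s2 p q; rewrite /union_adj s1 s2 [(q < k) && _]andbC [(k <= q) && _]andbC.
Qed.

Lemma join_adj_sym m h : symmetric h -> symmetric (join_adj m h).
Proof. by move=> s x y; rewrite /join_adj orbC eq_sym s. Qed.

Lemma cycle_gE k (p q : 'I_k) : cycle_g k p q = cycle_adj k p q.
Proof.
have modS (u : nat) : (u < k)%N -> (u.+1 %% k = if u.+1 < k then u.+1 else 0)%N.
  move=> uk; case: ltnP => h; first by rewrite modn_small.
  by rewrite (_ : u.+1 = k) ?modnn //; lia.
rewrite /cycle_g /cycle_adj /path_adj !modS //.
have := ltn_ord p; have := ltn_ord q.
by case: (ltnP p.+1 k); case: (ltnP q.+1 k) => *; apply/idP/idP; lia.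
Qed.

Lemma gunionE a b (e1 : rel 'I_a) (e2 : rel 'I_b) (h1 h2 : rel nat) :
  (forall i j, e1 i j = h1 i j) -> (forall i j, e2 i j = h2 i j) ->
  forall x y, gunion e1 e2 x y = union_adj a h1 h2 x y.
Proof.
move=> e1E e2E x y; rewrite /gunion /union_adj.
case: splitP => [i ->|i ->]; case: splitP => [j ->|j ->];
  rewrite ?e1E ?e2E ?ltn_ord ?addKn ?leq_addr //=.
all: by rewrite leqNgt ltn_ord /= ?orbF.
Qed.

Lemma gjoin_completeE a b (e : rel 'I_b) (h : rel nat) :
  (forall i j, e i j = h i j) ->
  forall x y, gjoin (complete_g a) e x y = join_adj a h x y.
Proof.
move=> eE x y; rewrite /gjoin /join_adj.
case: splitP => [i ->|i ->]; case: splitP => [j ->|j ->]; rewrite ?ltn_ord ?orbT //.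
- by rewrite /= neq_ltn ltn_addr.
- by rewrite eq_sym neq_ltn ltn_addr.
- by rewrite /= !addKn eE.
Qed.

Lemma join_adj_neq m h x y : x < m -> x != y -> join_adj m h x y.
Proof. by move=> xm; rewrite /join_adj xm. Qed.

Definition window_perm k a p := if p < a then p + k else if p < a + k then p - a else p.

Lemma window_permE k a p :
  [\/ p < a /\ window_perm k a p = p + k,
      a <= p < a + k /\ window_perm k a p = p - a |
      a + k <= p /\ window_perm k a p = p].
Proof.
rewrite /window_perm; case: ltnP => h1; first exact: Or31.
by case: ltnP => h2; [apply: Or32 | apply: Or33].
Qed.

Lemma window_perm_lt n k a p : a + k <= n -> p < n -> window_perm k a p < n.
Proof. by move=> akn pn; case: (window_permE k a p) => [[? ->]|[? ->]|[? ->]]; lia. Qed.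

Lemma window_perm_inj n k a p q : a + k <= n -> p < n -> q < n ->
  window_perm k a p = window_perm k a q -> p = q.
Proof.
move=> akn pn qn.
by case: (window_permE k a p) => [[? ->]|[? ->]|[? ->]];
   case: (window_permE k a q) => [[? ->]|[? ->]|[? ->]]; lia.
Qed.

Definition lift_at m (f : nat -> nat) x := if x < m then x else m + f (x - m).

Lemma lift_at_lt m n n' f x :
  (forall p, p < n -> f p < n') -> x < m + n -> lift_at m f x < m + n'.
Proof.
move=> fn xn; rewrite /lift_at; case: (ltnP x m) => xm /=; first lia.
by rewrite ltn_add2l fn //; lia.
Qed.

Lemma lift_at_inj m n f x y : (forall p q, p < n -> q < n -> f p = f q -> p = q) ->
  x < m + n -> y < m + n -> lift_at m f x = lift_at m f y -> x = y.
Proof.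
move=> f_inj xn yn; rewrite /lift_at.
case: ltnP => xm; case: ltnP => ym; try lia.
by move/addnI/f_inj => h; have := h ltac:(lia) ltac:(lia); lia.
Qed.

Lemma join_adj_lift_at m n f h h' x y :
  (forall p q, p < n -> q < n -> h' (f p) (f q) = h p q) ->
  x < m + n -> y < m + n -> join_adj m h' (lift_at m f x) (lift_at m f y) = join_adj m h x y.
Proof.
move=> fh xn yn; rewrite /join_adj /lift_at.
case: (ltnP x m) => xm; case: (ltnP y m) => ym /=; rewrite ?xm ?ym //.
- by rewrite ltnNge leq_addr; apply/idP/idP; lia.
- by rewrite ltnNge leq_addr; apply/idP/idP; lia.
- by rewrite !ltnNge !leq_addr !addKn fh //; lia.
Qed.

Definition edge (s t : nat) : rel nat := fun p q =>
  (p == s) && (q == t) || (p == t) && (q == s).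

(* Cutting the window [a, a+k-1] out of [P_n] and closing it into a cycle removes the
   path edges [{a-1, a}] and [{a+k-1, a+k}] and adds [{a, a+k-1}] and [{a-1, a+k}]; the
   guards [0 < a] and [a + k < n] drop the edges that do not exist at the ends of the path. *)
Definition removed_edge n k a : rel nat := fun p q =>
  (0 < a) && edge a.-1 a p q || (a + k < n) && edge (a + k).-1 (a + k) p q.
Definition added_edge n k a : rel nat := fun p q =>
  edge a (a + k).-1 p q || [&& 0 < a, a + k < n & edge a.-1 (a + k) p q].
Definition switch_adj n k a : rel nat := fun p q =>
  path_adj p q && ~~ removed_edge n k a p q || added_edge n k a p q.

Ltac decide_nat_atoms :=
  repeat match goal with
  | |- context [?u == ?v] =>
     let E := fresh in
     first [ have E : (u == v) = false by lia | have E : (u == v) = true by lia ];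
     rewrite E; clear E
  | |- context [(?u < ?v)%N] =>
     let E := fresh in
     first [ have E : (u < v)%N = false by lia | have E : (u < v)%N = true by lia ];
     rewrite E; clear E
  end.

Lemma union_adj_window_perm n k a p q : 2 < k -> a + k <= n -> p < n -> q < n ->
  union_adj k (cycle_adj k) path_adj (window_perm k a p) (window_perm k a q)
  = switch_adj n k a p q.
Proof.
move=> k_gt2 akn pn qn.
rewrite /union_adj /cycle_adj /switch_adj /path_adj /removed_edge /added_edge /edge.
rewrite /window_perm; case: (ltnP p a) => h1; [|case: (ltnP p (a + k)) => h2];
case: (ltnP q a) => h3; try (case: (ltnP q (a + k)) => h4);
decide_nat_atoms; rewrite /= ?andbF ?orbF ?andbT ?orbT //; apply/idP/idP; lia.
Qed.

Lemma bool_switch_count (e r1 r2 a1 a2 : bool) :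
  r1 || r2 ==> e -> a1 || a2 ==> ~~ e -> ~~ (r1 && r2) -> ~~ (a1 && a2) ->
  ((e && ~~ (r1 || r2) || (a1 || a2)) : nat) + r1 + r2 = e + a1 + a2.
Proof. by case: e; case: r1; case: r2; case: a1; case: a2. Qed.

Lemma switch_adj_count n k a p q : 2 < k ->
  (switch_adj n k a p q : nat) + ((0 < a) && edge a.-1 a p q)
    + ((a + k < n) && edge (a + k).-1 (a + k) p q)
  = path_adj p q + edge a (a + k).-1 p q + [&& 0 < a, a + k < n & edge a.-1 (a + k) p q].
Proof.
move=> k_gt2; apply: bool_switch_count; rewrite /path_adj /edge.
- by apply/implyP; lia.
- by apply/implyP; lia.
- by apply/negP; lia.
- by apply/negP; lia.
Qed.

Lemma gjoin_pathE m n x v : gjoin (complete_g m) (path_g n) x v = join_adj m path_adj x v.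
Proof. exact: gjoin_completeE. Qed.

Lemma gjoin_cycle_pathE m k n x v :
  gjoin (complete_g m) (gunion (cycle_g k) (path_g n)) x v
  = join_adj m (union_adj k (cycle_adj k) path_adj) x v.
Proof. by apply/gjoin_completeE/gunionE => //; apply: cycle_gE. Qed.

Lemma gjoin_path_sym m n : symmetric (gjoin (complete_g m) (path_g n)).
Proof. by move=> x v; rewrite !gjoin_pathE join_adj_sym //; exact: path_adj_sym. Qed.

Lemma gjoin_cycle_path_sym m k n :
  symmetric (gjoin (complete_g m) (gunion (cycle_g k) (path_g n))).
Proof.
move=> x v; rewrite !gjoin_cycle_pathE join_adj_sym //.
by apply: union_adj_sym; [exact: cycle_adj_sym | exact: path_adj_sym].
Qed.

Lemma window_relabel m n k a : 2 < k -> a + k <= n ->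
  exists2 tau : 'I_(m + n) -> 'I_(m + (k + (n - k))), bijective tau &
    forall x v, relpre tau (gjoin (complete_g m) (gunion (cycle_g k) (path_g (n - k)))) x v
              = join_adj m (switch_adj n k a) x v.
Proof.
move=> k_gt2 akn; have nE : k + (n - k) = n by rewrite subnKC //; lia.
have tau_lt (x : 'I_(m + n)) : lift_at m (window_perm k a) x < m + (k + (n - k)).
  by apply: lift_at_lt (ltn_ord x) => p; rewrite nE; apply: window_perm_lt.
exists (fun x => Ordinal (tau_lt x)).
  apply: inj_card_bij; last by rewrite !card_ord nE.
  move=> x x' /(congr1 val) /= /lift_at_inj eq_xx'; apply/val_inj/eq_xx' => //.
  by move=> p q; apply: window_perm_inj.
move=> x v; rewrite /= gjoin_cycle_pathE.
apply: join_adj_lift_at (ltn_ord x) (ltn_ord v) => p q pn qn.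
exact: union_adj_window_perm.
Qed.

Local Open Scope ring_scope.

Section RealSymmetricSpectral.
Variables (R : rcfType) (N : nat) (M : 'M[R]_N).
Hypothesis M_sym : M^T = M.

Local Notation toC := (real_complex R).
Local Notation A := (map_mx toC M).
Local Notation P := (spectralmx A).
Local Notation d := (spectral_diag A).

Lemma conj_real_complex (x : R) : (toC x)^* = toC x.
Proof. by apply: conj_Creal; rewrite complex_real. Qed.

Lemma map_real_complex_herm : A \is hermsymmx.
Proof.
apply/is_hermitianmxP; rewrite expr0 scale1r; apply/matrixP => i j.
by rewrite !mxE conj_real_complex -{1}M_sym mxE.
Qed.

Let A_spectral : A = invmx P *m diag_mx d *m P.
Proof. exact/orthomx_spectralP/hermitian_normalmx/map_real_complex_herm. Qed.

Let P_unitary : P \is unitarymx := spectral_unitarymx A.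

Lemma spectral_diag_realE j : d 0 j = toC (complex.Re (d 0 j)).
Proof.
rewrite RRe_real //.
exact: (mxOverP (hermitian_spectral_diag_real map_real_complex_herm)).
Qed.

Lemma eigenvalue_spectral_diag j : eigenvalue M (complex.Re (d 0 j)).
Proof.
rewrite eigenvalue_root_char -(fmorph_root toC) map_char_poly.
rewrite -eigenvalue_root_char; apply/eigenvalueP; exists (row j P).
  have PA : P *m A = diag_mx d *m P.
    by rewrite [X in P *m X]A_spectral !mulmxA mulmxV ?mul1mx // unitarymx_unit.
  by rewrite -row_mul PA row_mul row_diag_mx -scalemxAl -rowE spectral_diag_realE.
apply/eqP => /rowP row0.
have := P_unitary; rewrite qualifE => /eqP /matrixP /(_ j j).
rewrite !mxE eqxx big1 => [/eqP|i _]; first by rewrite eq_sym oner_eq0.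
by have := row0 i; rewrite !mxE => ->; rewrite mul0r.
Qed.

(* Conjugating by the unitary [P], the quadratic form becomes [\sum_j d_j |w_j|^2]. *)
Lemma spectral_rayleigh_le l : (forall j, complex.Re (d 0 j) <= l) ->
  forall z : 'rV[R]_N, (z *m M *m z^T) 0 0 <= l * (z *m z^T) 0 0.
Proof.
move=> d_le z; rewrite -lecR.
pose Z := map_mx toC z.
have ZT : Z^T = (Z ^t* )%sesqui by apply/matrixP => i j; rewrite !mxE conj_real_complex.
have ZAZ : toC ((z *m M *m z^T) 0 0) = (Z *m A *m Z^T) 0 0.
  by rewrite [in RHS]/Z map_trmx -!map_mxM [RHS]mxE.
have ZZ : toC ((z *m z^T) 0 0) = (Z *m Z^T) 0 0.
  by rewrite [in RHS]/Z map_trmx -!map_mxM [RHS]mxE.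
pose W := Z *m (P ^t* )%sesqui.
have WT : (W ^t* )%sesqui = P *m (Z ^t* )%sesqui by rewrite /W trmx_mul map_mxM trmxCK.
have ZAZ_W : Z *m A *m Z^T = W *m diag_mx d *m (W ^t* )%sesqui.
  by rewrite ZT WT [X in Z *m X]A_spectral invmx_unitary // /W !mulmxA.
have ZZ_W : Z *m Z^T = W *m (W ^t* )%sesqui.
  rewrite ZT WT /W -mulmxA (mulmxA _ P).
  by rewrite -invmx_unitary // mulVmx ?mul1mx // unitarymx_unit.
rewrite rmorphM /= ZAZ ZZ ZAZ_W ZZ_W mul_mx_diag; clearbody W.
rewrite -subr_ge0 !mxE mulr_sumr -sumrB sumr_ge0 // => j _.
rewrite !mxE (mulrC (W 0 j) (d 0 j)) -mulrA -mulrBl mulr_ge0 ?mul_conjC_ge0 //.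
by rewrite spectral_diag_realE -rmorphB /= -[0]/(toC 0) lecR subr_ge0.
Qed.

Lemma sym_mx_max_eigenvalue : (0 < N)%N ->
  exists l, eigenvalue M l /\
    forall z : 'rV[R]_N, (z *m M *m z^T) 0 0 <= l * (z *m z^T) 0 0.
Proof.
move=> N_gt0; pose j0 := [arg max_(j > Ordinal N_gt0) complex.Re (d 0 j)]%O.
exists (complex.Re (d 0 j0)); split; first exact: eigenvalue_spectral_diag.
apply: spectral_rayleigh_le => j; rewrite /j0.
by case: arg_maxP => // i _; apply.
Qed.

End RealSymmetricSpectral.

Section AlphaForm.
Variables (R : rcfType) (N : nat) (al : R).
Implicit Types (e : rel 'I_N) (y z w : 'I_N -> R) (l t : R).

Definition Amul e y x := \sum_v (e x v)%:R * (al * y x + (1 - al) * y v).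
Definition Aform e y := \sum_x y x * Amul e y x.
Definition sqnorm y := \sum_x y x ^+ 2.
Definition rayleigh_ub e l := forall z, Aform e z <= l * sqnorm z.
Definition eigenfun e l y := forall x, Amul e y x = l * y x.

Lemma A_alpha_mulE e y x : \sum_v A_alpha al e x v * y v = Amul e y x.
Proof.
have deg_sum : #|[pred u | e x u]|%:R = \sum_v (e x v)%:R :> R.
  rewrite -sum1_card natr_sum big_mkcond /=; apply: eq_bigr => v _.
  by rewrite inE; case: (e x v).
under eq_bigr do rewrite !mxE mulrDl.
rewrite big_split /= (bigD1 x) //= big1 ?addr0; last first.
  by move=> v /negbTE xv; rewrite eq_sym xv mul0r mulr0 mul0r.
rewrite eqxx mul1r deg_sum /Amul.
under [in RHS]eq_bigr do rewrite mulrDr.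
rewrite big_split /= mulr_sumr mulr_suml; congr (_ + _); apply: eq_bigr => v _; ring.
Qed.

Lemma A_alpha_trmx e : symmetric e -> (A_alpha al e)^T = A_alpha al e.
Proof.
move=> e_sym; apply/matrixP => i j; rewrite !mxE e_sym.
by case: (eqVneq i j) => [->|ij]; rewrite ?mul0r.
Qed.

Lemma A_alpha_mulC e y j : symmetric e ->
  \sum_i y i * A_alpha al e i j = Amul e y j.
Proof.
move=> e_sym; rewrite -A_alpha_mulE; apply: eq_bigr => i _.
by move/matrixP: (A_alpha_trmx e_sym) => /(_ j i); rewrite mxE mulrC => ->.
Qed.

Lemma A_alpha_formE e y : symmetric e ->
  ((\row_i y i) *m A_alpha al e *m (\row_i y i)^T) 0 0 = Aform e y.
Proof.
move=> e_sym; rewrite mxE; apply: eq_bigr => j _.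
rewrite !mxE mulrC -A_alpha_mulC //; congr (_ * _); apply: eq_bigr => i _.
by rewrite !mxE.
Qed.

Lemma sqnormE y : ((\row_i y i) *m (\row_i y i)^T) 0 0 = sqnorm y.
Proof. by rewrite mxE; apply: eq_bigr => j _; rewrite !mxE expr2. Qed.

Lemma sqnorm_ge0 y : 0 <= sqnorm y.
Proof. by apply: sumr_ge0 => i _; apply: sqr_ge0. Qed.

Lemma sqnorm_eq0 y : sqnorm y = 0 -> forall x, y x = 0.
Proof.
move/psumr_eq0P => y0 x; apply/eqP; rewrite -sqrf_eq0; apply/eqP.
exact: y0 (fun i _ => sqr_ge0 (y i)) x isT.
Qed.

Lemma sqnorm_gt0 y x : y x != 0 -> 0 < sqnorm y.
Proof.
move=> yx; rewrite lt_def sqnorm_ge0 andbT.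
by apply: contra yx => /eqP/sqnorm_eq0 ->.
Qed.

Lemma Aform_eigenfun e l y : eigenfun e l y -> Aform e y = l * sqnorm y.
Proof.
move=> ey; rewrite /Aform /sqnorm mulr_sumr; apply: eq_bigr => x _.
by rewrite ey expr2 mulrCA.
Qed.

Lemma eigenvalue_eigenfun e l : symmetric e -> eigenvalue (A_alpha al e) l ->
  exists y, (exists x, y x != 0) /\ eigenfun e l y.
Proof.
move=> e_sym /eigenvalueP [v v_eig v_neq0]; exists (fun j => v 0 j); split.
  apply/existsP; apply: contraNT v_neq0 => /existsPn v0.
  by apply/eqP/rowP => j; rewrite mxE; move/negPn/eqP: (v0 j).
move=> j; rewrite -A_alpha_mulC //.
by have /rowP /(_ j) := v_eig; rewrite !mxE => <-.
Qed.

Lemma lambda1_rayleigh e : (0 < N)%N -> symmetric e ->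
  exists l, [/\ is_lambda1 (A_alpha al e) l, rayleigh_ub e l &
    exists y, (exists x, y x != 0) /\ eigenfun e l y].
Proof.
move=> N_gt0 e_sym.
have [l [l_eig l_max]] := sym_mx_max_eigenvalue (A_alpha_trmx e_sym) N_gt0.
have l_ub : rayleigh_ub e l.
  by move=> z; rewrite -A_alpha_formE // -sqnormE.
exists l; split=> //; last exact: eigenvalue_eigenfun.
split=> // x /(eigenvalue_eigenfun e_sym) [y [[u yu] ey]].
by have := l_ub y; rewrite (Aform_eigenfun ey) ler_pM2r // (sqnorm_gt0 yu).
Qed.

Lemma Amul_linear e y w t x :
  Amul e (fun u => y u + t * w u) x = Amul e y x + t * Amul e w x.
Proof. by rewrite /Amul mulr_sumr -big_split; apply: eq_bigr => v _ /=; ring. Qed.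

Lemma Amul_pairingE e y w :
  \sum_x y x * Amul e w x = \sum_x \sum_v (e x v)%:R * (al * (y x * w x))
                          + \sum_x \sum_v (e x v)%:R * ((1 - al) * (y x * w v)).
Proof.
rewrite -big_split; apply: eq_bigr => x _ /=.
by rewrite /Amul mulr_sumr -big_split; apply: eq_bigr => v _ /=; ring.
Qed.

Lemma Amul_selfadjoint e y w : symmetric e ->
  \sum_x y x * Amul e w x = \sum_x w x * Amul e y x.
Proof.
move=> e_sym; rewrite !Amul_pairingE; congr (_ + _).
  by apply: eq_bigr => x _; apply: eq_bigr => v _; rewrite [y x * _]mulrC.
rewrite exchange_big; apply: eq_bigr => x _; apply: eq_bigr => v _.
by rewrite e_sym [y v * _]mulrC.
Qed.

(* [F z = l |z|^2 - Aform e z] is a nonnegative quadratic form vanishing at [y]; along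
   [y + t w] with [w = l y - A y] it equals [2 t |w|^2 + t^2 F w], which is negative
   for small [t < 0] unless [w = 0]. *)
Lemma rayleigh_eq_eigenfun e l y : symmetric e -> rayleigh_ub e l ->
  Aform e y = l * sqnorm y -> eigenfun e l y.
Proof.
move=> e_sym l_ub y_eq.
pose L z x := l * z x - Amul e z x.
pose F z := \sum_x z x * L z x.
have FE z : F z = l * sqnorm z - Aform e z.
  by rewrite /F /Aform /sqnorm mulr_sumr -sumrB; apply: eq_bigr => x _; rewrite /L; ring.
have F_ge0 z : 0 <= F z by rewrite FE subr_ge0.
pose w := L y; pose s := sqnorm w; pose c := F w.
pose t := - s / (c + 1).
have t_eq : t * (c + 1) = - s.
  by rewrite /t mulfVK // lt0r_neq0 // ltr_wpDl // F_ge0.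
have FyE : F y = 0 by rewrite FE y_eq subrr.
have L_sym : \sum_x y x * L w x = \sum_x w x * L y x.
  rewrite /L; under eq_bigr do rewrite mulrBr.
  under [RHS]eq_bigr do rewrite mulrBr.
  rewrite !sumrB Amul_selfadjoint //; congr (_ - _).
  by apply: eq_bigr => x _; ring.
have FzE : F (fun u => y u + t * w u) = 2 * t * s + t ^+ 2 * c.
  have Lz x : L (fun u => y u + t * w u) x = L y x + t * L w x.
    by rewrite /L Amul_linear; ring.
  rewrite {1}/F; under eq_bigr do rewrite Lz.
  have -> : \sum_x (y x + t * w x) * (L y x + t * L w x) =
      F y + t * (\sum_x y x * L w x) + t * (\sum_x w x * L y x) + t ^+ 2 * c.
    by rewrite /c /F !mulr_sumr -!big_split; apply: eq_bigr => x _ /=; ring.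
  rewrite FyE L_sym.
  have -> : \sum_x w x * L y x = s by apply: eq_bigr => x _; rewrite expr2.
  ring.
have s0 : s = 0.
  have := F_ge0 (fun u => y u + t * w u); rewrite FzE.
  have := sqnorm_ge0 w; have := F_ge0 w; rewrite -/s -/c; nra.
move=> x; apply/eqP; rewrite eq_sym -subr_eq0; apply/eqP.
exact: sqnorm_eq0 s0 x.
Qed.

Lemma Aform_le_abs e y : 0 <= al <= 1 -> Aform e y <= Aform e (fun u => `|y u|).
Proof.
move=> /andP [al_ge0 al_le1]; rewrite /Aform !Amul_pairingE.
rewrite lerD //; apply: ler_sum => x _; apply: ler_sum => v _.
  by rewrite -normrM ger0_norm // -expr2 sqr_ge0.
by rewrite -normrM ler_wpM2l ?ler0n // ler_wpM2l ?subr_ge0 // ler_norm.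
Qed.

Lemma eigenfun_abs e l y : symmetric e -> 0 <= al <= 1 -> rayleigh_ub e l ->
  eigenfun e l y -> eigenfun e l (fun u => `|y u|).
Proof.
move=> e_sym al01 l_ub ey; apply: rayleigh_eq_eigenfun => //.
have sqnorm_abs : sqnorm (fun u => `|y u|) = sqnorm y.
  by apply: eq_bigr => x _; rewrite real_normK // num_real.
apply/eqP; rewrite eq_le l_ub sqnorm_abs -(Aform_eigenfun ey).
exact: Aform_le_abs.
Qed.

(* At a zero [x] the eigen-equation reads [0 = (1 - al) \sum_(v ~ x) y v]. *)
Lemma eigenfun_zero_adj e l y x v : al < 1 -> (forall u, 0 <= y u) ->
  eigenfun e l y -> y x = 0 -> e x v -> y v = 0.
Proof.
move=> al_lt1 y_ge0 ey yx0 exv.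
have := ey x; rewrite /Amul yx0 !mulr0.
under eq_bigr do rewrite add0r.
move/psumr_eq0P => sum0.
have /sum0 : forall u, true -> 0 <= (e x u)%:R * ((1 - al) * y u).
  by move=> u _; rewrite mulr_ge0 // mulr_ge0 // subr_ge0 ltW.
move=> /(_ v isT) /eqP; rewrite exv mul1r mulf_eq0 subr_eq0 eq_sym lt_eqF //=.
by move/eqP.
Qed.

Lemma eigenfun_gt0 e l y c : symmetric e -> (forall v, v != c -> e c v) ->
  al < 1 -> (forall u, 0 <= y u) -> (exists u, y u != 0) ->
  eigenfun e l y -> forall x, 0 < y x.
Proof.
move=> e_sym c_dom al_lt1 y_ge0 [u yu] ey x; rewrite lt_def y_ge0 andbT.
apply: contraNneq yu => yx0; apply/eqP.
have yc : y c = 0.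
  case: (eqVneq x c) => [<- //|xc].
  by apply: eigenfun_zero_adj yx0 _; rewrite // e_sym c_dom.
case: (eqVneq u c) => [-> //|uc].
exact: eigenfun_zero_adj yc (c_dom _ uc).
Qed.

Lemma lambda1_perron e c : symmetric e -> (forall v, v != c -> e c v) ->
  0 <= al < 1 -> exists l, [/\ is_lambda1 (A_alpha al e) l, rayleigh_ub e l &
    exists y, (forall x, 0 < y x) /\ eigenfun e l y].
Proof.
move=> e_sym c_dom /andP [al_ge0 al_lt1].
have N_gt0 : (0 < N)%N := leq_ltn_trans (leq0n _) (ltn_ord c).
have [l [l1 l_ub [y [[u yu] ey]]]] := lambda1_rayleigh N_gt0 e_sym.
exists l; split=> //; exists (fun u => `|y u|); split; last first.
  by apply: eigenfun_abs => //; rewrite al_ge0 ltW.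
apply: (eigenfun_gt0 e_sym c_dom al_lt1) => //.
- by exists u; rewrite normr_eq0.
- by apply: eigenfun_abs => //; rewrite al_ge0 ltW.
Qed.

Lemma Aform_diff e e' y : Aform e' y - Aform e y =
  \sum_x \sum_v ((e' x v)%:R - (e x v)%:R) * (y x * (al * y x + (1 - al) * y v)).
Proof.
rewrite /Aform /Amul -sumrB; apply: eq_bigr => x _.
rewrite !mulr_sumr -sumrB; apply: eq_bigr => v _; ring.
Qed.

Lemma Amul_diff e e' y x : Amul e' y x - Amul e y x =
  \sum_v ((e' x v)%:R - (e x v)%:R) * (al * y x + (1 - al) * y v).
Proof. by rewrite /Amul -sumrB; apply: eq_bigr => v _; rewrite -mulrBl. Qed.

(* If [l = l'], then [y] attains the Rayleigh bound of [e'], so it is an eigenvector of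
   [e'] as well. *)
Lemma lambda1_lt_of_switch e e' l l' y x0 :
  symmetric e' -> rayleigh_ub e' l' -> eigenfun e l y -> 0 < sqnorm y ->
  Aform e y <= Aform e' y -> Amul e' y x0 != Amul e y x0 -> l < l'.
Proof.
move=> e'_sym l'_ub ey y_gt0 form_le Amul_neq.
have form_e : Aform e y = l * sqnorm y := Aform_eigenfun ey.
have l_le : l <= l'.
  by rewrite -(ler_pM2r y_gt0) -form_e (le_trans form_le (l'_ub y)).
rewrite lt_neqAle l_le andbT; apply: contra Amul_neq => /eqP l_eq.
have form_e' : Aform e' y = l' * sqnorm y.
  by apply/eqP; rewrite eq_le l'_ub -l_eq -form_e form_le.
by rewrite (rayleigh_eq_eigenfun e'_sym l'_ub form_e') ey l_eq.
Qed.

End AlphaForm.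

Section Relabel.
Variables (R : rcfType) (N N' : nat) (al : R) (f : 'I_N -> 'I_N') (g : 'I_N' -> 'I_N).
Hypotheses (fK : cancel f g) (gK : cancel g f).

Let f_bij : {on predT, bijective f}.
Proof. by apply: onW_bij; exists g. Qed.

Lemma Aform_relpre (e : rel 'I_N') (y : 'I_N -> R) :
  Aform al (relpre f e) y = Aform al e (y \o g).
Proof.
rewrite /Aform (reindex f f_bij) /=; apply: eq_bigr => x _.
rewrite /Amul (reindex f f_bij) fK; congr (_ * _); apply: eq_bigr => v _.
by rewrite /= !fK.
Qed.

Lemma sqnorm_comp (y : 'I_N -> R) : sqnorm (y \o g) = sqnorm y.
Proof. by rewrite /sqnorm (reindex f f_bij); apply: eq_bigr => x _; rewrite /= fK. Qed.

Lemma rayleigh_ub_relpre (e : rel 'I_N') l :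
  rayleigh_ub al e l -> rayleigh_ub al (relpre f e) l.
Proof. by move=> l_ub z; rewrite Aform_relpre -(sqnorm_comp z). Qed.

End Relabel.

Section EdgeSums.
Variables (R : rcfType) (N : nat).

Lemma sum_nat_delta s (F : nat -> R) :
  (s < N)%N -> \sum_(x < N) (x == s :> nat)%:R * F x = F s.
Proof.
move=> sN; rewrite (bigD1 (Ordinal sN)) //= eqxx mul1r big1 ?addr0 // => x xs.
rewrite (_ : (x == s :> nat) = false) ?mul0r //.
by apply: contraNF xs => /eqP xs; apply/eqP/val_inj.
Qed.

Lemma edgeE s t p q : s != t ->
  (edge s t p q)%:R = (p == s)%:R * (q == t)%:R + (p == t)%:R * (q == s)%:R :> R.
Proof.
move=> st; rewrite -!natrM -natrD; congr (_%:R).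
by move: st; rewrite /edge; lia.
Qed.

Lemma sum_edge_row s t x (G : nat -> R) : (s < N)%N -> (t < N)%N -> s != t ->
  \sum_(v < N) (edge s t x v)%:R * G v = (x == s)%:R * G t + (x == t)%:R * G s.
Proof.
move=> sN tN st.
under eq_bigr do rewrite edgeE // mulrDl -!mulrA.
by rewrite big_split /= -!mulr_sumr !sum_nat_delta.
Qed.

Lemma sum_edge s t (G : nat -> nat -> R) : (s < N)%N -> (t < N)%N -> s != t ->
  \sum_(x < N) \sum_(v < N) (edge s t x v)%:R * G x v = G s t + G t s.
Proof.
move=> sN tN st; under eq_bigr do rewrite sum_edge_row //.
by rewrite big_split /= (sum_nat_delta (G^~ t) sN) (sum_nat_delta (G^~ s) tN).
Qed.

Lemma sum_cond_edge (c : bool) s t (G : nat -> nat -> R) :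
  (c -> [/\ (s < N)%N, (t < N)%N & s != t]) ->
  \sum_(x < N) \sum_(v < N) (c && edge s t x v)%:R * G x v = c%:R * (G s t + G t s).
Proof.
case: c => [/(_ isT) [sN tN st]|_]; first by rewrite mul1r sum_edge.
by rewrite mul0r big1 // => x _; rewrite big1 // => v _; rewrite mul0r.
Qed.

Lemma sum_cond_edge_row (c : bool) s t x (G : nat -> R) :
  (c -> [/\ (s < N)%N, (t < N)%N & s != t]) ->
  \sum_(v < N) (c && edge s t x v)%:R * G v = c%:R * ((x == s)%:R * G t + (x == t)%:R * G s).
Proof.
case: c => [/(_ isT) [sN tN st]|_]; first by rewrite mul1r sum_edge_row.
by rewrite mul0r big1 // => v _; rewrite mul0r.
Qed.

End EdgeSums.

Section SwitchGain.
Variables (R : rcfType) (al : R) (Y : nat -> R) (n k a : nat).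
Hypotheses (k_gt2 : (2 < k)%N) (akn : (a + k <= n)%N).

Definition incid s t := al * Y s + (1 - al) * Y t.
Definition edge_weight s t := Y s * incid s t + Y t * incid t s.
Definition edge_load s t x := (x == s)%:R * incid x t + (x == t)%:R * incid x s.

Definition switch_gain :=
  edge_weight a (a + k).-1 + [&& 0 < a & a + k < n]%N%:R * edge_weight a.-1 (a + k)
  - (0 < a)%N%:R * edge_weight a.-1 a - (a + k < n)%N%:R * edge_weight (a + k).-1 (a + k).
Definition switch_load x :=
  edge_load a (a + k).-1 x + [&& 0 < a & a + k < n]%N%:R * edge_load a.-1 (a + k) x
  - (0 < a)%N%:R * edge_load a.-1 a x - (a + k < n)%N%:R * edge_load (a + k).-1 (a + k) x.

Lemma switch_adj_diffE p q :
  (switch_adj n k a p q)%:R - (path_adj p q)%:R =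
    (true && edge a (a + k).-1 p q)%:R
    + ([&& 0 < a & a + k < n]%N && edge a.-1 (a + k) p q)%:R
    - ((0 < a)%N && edge a.-1 a p q)%:R
    - ((a + k < n)%N && edge (a + k).-1 (a + k) p q)%:R :> R.
Proof.
have := congr1 (GRing.natmul (1 : R)) (switch_adj_count n a p q k_gt2).
rewrite -andbA !natrD /=; lra.
Qed.

Let edge_ok (c : bool) s t := c -> [/\ (s < n)%N, (t < n)%N & s != t].
Let ok_AB : edge_ok true a (a + k).-1. Proof. by move=> _; split; lia. Qed.
Let ok_PQ : edge_ok [&& 0 < a & a + k < n]%N a.-1 (a + k). Proof. by move=> ?; split; lia. Qed.
Let ok_PA : edge_ok (0 < a)%N a.-1 a. Proof. by move=> ?; split; lia. Qed.
Let ok_BQ : edge_ok (a + k < n)%N (a + k).-1 (a + k). Proof. by move=> ?; split; lia. Qed.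

Lemma sum_switch_adj_diff :
  \sum_(p < n) \sum_(q < n) ((switch_adj n k a p q)%:R - (path_adj p q)%:R) * (Y p * incid p q)
  = switch_gain.
Proof.
under eq_bigr do under eq_bigr do rewrite switch_adj_diffE !mulrBl mulrDl.
pose G p q := Y p * incid p q.
under eq_bigr do rewrite !sumrB big_split.
rewrite !sumrB big_split (sum_cond_edge G ok_AB) (sum_cond_edge G ok_PQ).
rewrite (sum_cond_edge G ok_PA) (sum_cond_edge G ok_BQ) mulr1n mul1r.
reflexivity.
Qed.

Lemma sum_switch_adj_diff_row p :
  \sum_(q < n) ((switch_adj n k a p q)%:R - (path_adj p q)%:R) * incid p q = switch_load p.
Proof.
pose G := incid p.
under eq_bigr do rewrite switch_adj_diffE !mulrBl mulrDl.
rewrite !sumrB big_split (sum_cond_edge_row p G ok_AB) (sum_cond_edge_row p G ok_PQ).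
rewrite (sum_cond_edge_row p G ok_PA) (sum_cond_edge_row p G ok_BQ) mulr1n mul1r.
reflexivity.
Qed.

End SwitchGain.

Section WindowChoice.
Variables (R : rcfType) (al : R) (Y : nat -> R) (n k : nat).
Hypotheses (al01 : 0 < al < 1) (k_gt2 : (2 < k)%N) (kn : (k < n)%N).
Hypothesis Y_gt0 : forall i, (i < n)%N -> 0 < Y i.

Local Notation gain := (switch_gain al Y n k).
Local Notation load := (switch_load al Y n k).

(* Here the gain is [al (Y_0^2 - Y_k^2) + 2 (1 - al) Y_(k-1) (Y_0 - Y_k)]. *)
Lemma first_window_gain : Y k <= Y 0%N -> 0 <= gain 0%N /\ 0 < load 0%N 0%N.
Proof.
move=> Yk_le; have /andP [al_gt0 al_lt1] := al01.
have Y0 : 0 < Y 0%N by apply: Y_gt0; lia.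
have YB : 0 < Y k.-1 by apply: Y_gt0; lia.
have Yk : 0 < Y k by apply: Y_gt0.
rewrite /switch_gain /switch_load /edge_load /edge_weight /incid add0n.
decide_nat_atoms; rewrite /=.
have deg_term : 0 <= al * ((Y 0%N - Y k) * (Y 0%N + Y k)).
  by apply: mulr_ge0; [lra | apply: mulr_ge0; lra].
have adj_term : 0 <= (1 - al) * (Y k.-1 * (Y 0%N - Y k)).
  by apply: mulr_ge0; [lra | apply: mulr_ge0; lra].
have adj_load : 0 < (1 - al) * Y k.-1 by apply: mulr_gt0; lra.
split; nra.
Qed.

(* With [P, A, B = n-k-1, n-k, n-1] the gain is
   [al (Y_B^2 - Y_P^2) + 2 (1 - al) Y_A (Y_B - Y_P)]. *)
Lemma last_window_gain :
  Y (n - k).-1 <= Y n.-1 -> 0 <= gain (n - k) /\ 0 < load (n - k) n.-1.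
Proof.
move=> YP_le; have /andP [al_gt0 al_lt1] := al01.
have YP : 0 < Y (n - k).-1 by apply: Y_gt0; lia.
have YA : 0 < Y (n - k) by apply: Y_gt0; lia.
have YB : 0 < Y n.-1 by apply: Y_gt0; lia.
rewrite /switch_gain /switch_load /edge_load /edge_weight /incid subnK ?(ltnW kn) //.
decide_nat_atoms; rewrite /=.
have deg_term : 0 <= al * ((Y n.-1 - Y (n - k).-1) * (Y n.-1 + Y (n - k).-1)).
  by apply: mulr_ge0; [lra | apply: mulr_ge0; lra].
have adj_term : 0 <= (1 - al) * (Y (n - k) * (Y n.-1 - Y (n - k).-1)).
  by apply: mulr_ge0; [lra | apply: mulr_ge0; lra].
have adj_load : 0 < (1 - al) * Y (n - k) by apply: mulr_gt0; lra.
split; nra.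
Qed.

(* Here the gain is [2 (1 - al) (Y_(a+k-1) - Y_(a-1)) (Y_a - Y_(a+k))]. *)
Lemma inner_window_gain a : (0 < a)%N -> (a + k < n)%N ->
  Y a.-1 < Y (a + k).-1 -> Y (a + k) <= Y a -> 0 <= gain a /\ 0 < load a a.
Proof.
move=> a_gt0 akn YB_gt YQ_le; have /andP [al_gt0 al_lt1] := al01.
have YA : 0 < Y a by apply: Y_gt0; lia.
rewrite /switch_gain /switch_load /edge_load /edge_weight /incid.
decide_nat_atoms; rewrite /=.
have adj_term : 0 <= (1 - al) * ((Y (a + k).-1 - Y a.-1) * (Y a - Y (a + k))).
  by apply: mulr_ge0; [lra | apply: mulr_ge0; lra].
have adj_load : 0 < (1 - al) * (Y (a + k).-1 - Y a.-1) by apply: mulr_gt0; lra.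
split; nra.
Qed.

(* The window slides right while [Y (i + k) > Y i]; it stops at the first descent, or
   at the end of the path if there is none. *)
Lemma exists_switch_window :
  exists a, [/\ (a + k <= n)%N, 0 <= gain a & exists2 p, (p < n)%N & 0 < load a p].
Proof.
have [Yk_le|Y0_lt] := lerP (Y k) (Y 0%N).
  have [gain_ge0 load_gt0] := first_window_gain Yk_le.
  by exists 0%N; split=> //; [lia | exists 0%N; lia].
have [descent|no_descent] := boolP [exists i : 'I_(n - k), Y (i + k) <= Y i].
  have exP : exists i, (i < n - k)%N && (Y (i + k) <= Y i).
    by case/existsP: descent => i Yi_le; exists i; rewrite ltn_ord.
  have [a /andP [a_lt Ya_le] a_min] := ex_minnP exP.
  have a_gt0 : (0 < a)%N.
    by case: a a_lt Ya_le a_min => // _; rewrite add0n leNgt Y0_lt.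
  have YB_gt : Y a.-1 < Y (a + k).-1.
    rewrite ltNge (_ : (a + k).-1 = a.-1 + k)%N; last lia.
    by apply/negP => Y_le; have := a_min a.-1; rewrite Y_le andbT => /(_ ltac:(lia)); lia.
  have [gain_ge0 load_gt0] := inner_window_gain a_gt0 ltac:(lia) YB_gt Ya_le.
  by exists a; split=> //; [lia | exists a; lia].
have YB_ge : Y (n - k).-1 <= Y n.-1.
  rewrite leNgt; apply: contraNN no_descent => Y_lt.
  have last_lt : ((n - k).-1 < n - k)%N by lia.
  apply/existsP; exists (Ordinal last_lt).
  by rewrite /= (_ : ((n - k).-1 + k)%N = n.-1) ?ltW //; lia.
have [gain_ge0 load_gt0] := last_window_gain YB_ge.
by exists (n - k)%N; split=> //; [lia | exists n.-1; lia].
Qed.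

End WindowChoice.

Section JoinSums.
Variables (R : rcfType) (m n : nat).

Lemma join_adj_low h h' x y : (x < m)%N || (y < m)%N -> join_adj m h' x y = join_adj m h x y.
Proof. by rewrite /join_adj => ->. Qed.

Lemma join_adj_high h p q : join_adj m h (m + p) (m + q) = h p q.
Proof. by rewrite /join_adj !ltnNge !leq_addr !addKn. Qed.

Lemma sum_join_adj_diff_row h h' p (G : nat -> R) :
  \sum_(v < m + n) ((join_adj m h' (m + p) v)%:R - (join_adj m h (m + p) v)%:R) * G v
  = \sum_(q < n) ((h' p q)%:R - (h p q)%:R) * G (m + q).
Proof.
rewrite big_split_ord /= big1 ?add0r => [|v _]; last first.
  by rewrite (join_adj_low h) ?ltn_ord ?orbT // subrr mul0r.
by apply: eq_bigr => q _; rewrite !join_adj_high.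
Qed.

Lemma sum_join_adj_diff h h' (G : nat -> nat -> R) :
  \sum_(x < m + n) \sum_(v < m + n)
      ((join_adj m h' x v)%:R - (join_adj m h x v)%:R) * G x v
  = \sum_(p < n) \sum_(q < n) ((h' p q)%:R - (h p q)%:R) * G (m + p) (m + q).
Proof.
rewrite big_split_ord /= big1 ?add0r => [|x _]; last first.
  by apply: big1 => v _; rewrite (join_adj_low h) ?ltn_ord // subrr mul0r.
by apply: eq_bigr => p _; rewrite sum_join_adj_diff_row.
Qed.

End JoinSums.

Definition nat_ext (R : rcfType) N (y : 'I_N -> R) (i : nat) : R :=
  if insub i is Some x then y x else 0.

Lemma nat_extE (R : rcfType) N (y : 'I_N -> R) (x : 'I_N) : nat_ext y x = y x.
Proof. by rewrite /nat_ext valK. Qed.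

Lemma nat_ext_gt0 (R : rcfType) N (y : 'I_N -> R) i :
  (forall x, 0 < y x) -> (i < N)%N -> 0 < nat_ext y i.
Proof. by move=> y_gt0 iN; rewrite (_ : i = Ordinal iN) // nat_extE. Qed.

Section JoinSwitch.
Variables (R : rcfType) (al : R) (m n k a : nat).
Hypotheses (k_gt2 : (2 < k)%N) (akn : (a + k <= n)%N).
Variables (e e' : rel 'I_(m + n)).
Hypotheses (eE : forall x v, e x v = join_adj m path_adj x v)
           (e'E : forall x v, e' x v = join_adj m (switch_adj n k a) x v).
Variable y : 'I_(m + n) -> R.
Local Notation Yp := (fun i => nat_ext y (m + i)).

Lemma Aform_join_switch : Aform al e' y - Aform al e y = switch_gain al Yp n k a.
Proof.
rewrite Aform_diff.
under eq_bigr do under eq_bigr do rewrite eE e'E -!(nat_extE y).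
rewrite (sum_join_adj_diff _ _ _ _
  (fun x v => nat_ext y x * (al * nat_ext y x + (1 - al) * nat_ext y v))).
exact: sum_switch_adj_diff.
Qed.

Lemma Amul_join_switch x p : val x = (m + p)%N ->
  Amul al e' y x - Amul al e y x = switch_load al Yp n k a p.
Proof.
move=> xE; rewrite Amul_diff.
under eq_bigr do rewrite eE e'E -!(nat_extE y) xE.
rewrite (sum_join_adj_diff_row _ _ _ _ _
  (fun v => al * nat_ext y (m + p) + (1 - al) * nat_ext y v)).
exact: sum_switch_adj_diff_row.
Qed.

End JoinSwitch.

Lemma lambda1_perron_join_path (R : rcfType) (al : R) m n : (0 < m)%N -> 0 <= al < 1 ->
  exists l, [/\ is_lambda1 (A_alpha al (gjoin (complete_g m) (path_g n))) l,
    rayleigh_ub al (gjoin (complete_g m) (path_g n)) l &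
    exists y, (forall x, 0 < y x) /\ eigenfun al (gjoin (complete_g m) (path_g n)) l y].
Proof.
move=> m_gt0 al01; have mn_gt0 : (0 < m + n)%N by rewrite ltn_addr.
have c_dom v : v != Ordinal mn_gt0 -> gjoin (complete_g m) (path_g n) (Ordinal mn_gt0) v.
  rewrite gjoin_pathE => vc; rewrite join_adj_neq //; apply: contra vc => /eqP cv.
  exact/eqP/val_inj/esym.
exact: lambda1_perron (@gjoin_path_sym m n) c_dom al01.
Qed.

Theorem mainTheorem18 (R : rcfType) (alpha : R) (m n k : nat) :
  1 / 2 < alpha -> alpha < 1 -> (1 <= m)%N -> (3 <= k)%N -> (k <= n - 1)%N ->
  exists l1 l2 : R,
    is_lambda1
      (A_alpha alpha (gjoin (complete_g m) (gunion (cycle_g k) (path_g (n - k))))) l1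
    /\ is_lambda1 (A_alpha alpha (gjoin (complete_g m) (path_g n))) l2
    /\ l2 < l1.
Proof.
move=> al_gt al_lt1 m_gt0 k_ge3 kn.
have k_gt2 : (2 < k)%N by lia.
have k_lt_n : (k < n)%N by lia.
have al01 : 0 < alpha < 1 by apply/andP; split; lra.
have al01' : 0 <= alpha < 1 by apply/andP; split; lra.
have [l2 [l2_max l2_ub [y [y_gt0 y_eig]]]] := lambda1_perron_join_path n m_gt0 al01'.
have N1_gt0 : (0 < m + (k + (n - k)))%N by lia.
have [l1 [l1_max l1_ub _]] :=
  lambda1_rayleigh alpha N1_gt0 (@gjoin_cycle_path_sym m k (n - k)).
have Y_gt0 i : (i < n)%N -> 0 < nat_ext y (m + i).
  by move=> i_lt; apply: nat_ext_gt0; rewrite ?ltn_add2l.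
have [a [akn gain_ge0 [p0 p0n load_gt0]]] := exists_switch_window al01 k_gt2 k_lt_n Y_gt0.
have [tau [g tauK gK] tauE] := window_relabel m k_gt2 akn.
exists l1, l2; do 2!split=> //.
have mp0 : (m + p0 < m + n)%N by rewrite ltn_add2l.
apply: (lambda1_lt_of_switch (x0 := Ordinal mp0) _ (rayleigh_ub_relpre tauK gK l1_ub) y_eig).
- by move=> x v; apply: gjoin_cycle_path_sym.
- exact: sqnorm_gt0 (lt0r_neq0 (y_gt0 (Ordinal mp0))).
- by rewrite -subr_ge0 (Aform_join_switch alpha k_gt2 akn (@gjoin_pathE m n) tauE).
- by rewrite -subr_eq0 (Amul_join_switch alpha k_gt2 akn (@gjoin_pathE m n) tauE y (p := p0))
    // gt_eqF.
Qed.
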